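(* Let $n$ be a positive integer and suppose that $c_n<1$, where $c_n$ is defined below. Then for every finite group $G$ with $H_n(G):=\langle x\in G \;|\; x^n\neq 1\rangle\neq 1$ we have $|G:H_n(G)|<\frac{1}{1-c_n}$.
   Context: For a group $K$ and an automorphism $\phi$ of $K$ whose order divides $n$, write $x^\phi$ for the image of $x$ under $\phi$ and set $X_{n,\phi}(K):=\{x\in K \;|\; x x^{\phi} x^{\phi^2}\cdots x^{\phi^{n-1}}=1\}$. Define $$c_n:=\sup\left(\left\{\frac{|X_{n,\phi}(H)|}{|H|} : H \text{ a finite group},\ \phi\in \mathrm{Aut}(H),\ \phi^n=\mathrm{id}\right\}\setminus\{1\}\right).$$ *)

From HB Require Import structures.
From mathcomp Require Import all_boot all_order all_algebra all_fingroup.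
From mathcomp Require Import boolp classical_sets reals.
Unset Printing Implicit Defensive.
Import Order.TTheory GRing.Theory Num.Theory.

(* X_{n,phi}(H) for H the whole finite group gT and phi : {perm gT}:
   { x | x * x^phi * x^(phi^2) * ... * x^(phi^(n-1)) = 1 }  (ordered product). *)
Definition Xnphi (gT : finGroupType) (n : nat) (phi : {perm gT}) : {set gT} :=
  [set x : gT | (\prod_(i < n) (phi ^+ i)%g x)%g == 1%g].

Definition cn_ratios (R : realType) (n : nat) : set R :=
  [set r | exists (gT : finGroupType) (phi : {perm gT}),
      [/\ phi \in Aut [set: gT], (phi ^+ n)%g = 1%g &
          r = (#|Xnphi gT n phi|%:R / #|[set: gT]|%:R)%R]] `\ 1%R.

Definition c_n (R : realType) (n : nat) : R := sup (cn_ratios R n).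

Definition Hn (gT : finGroupType) (G : {set gT}) (n : nat) : {set gT} :=
  <<[set x in G | (x ^+ n != 1)%g]>>%g.

From HB Require Import structures.
From mathcomp Require Import all_boot all_order all_algebra all_fingroup.
From mathcomp Require Import boolp classical_sets reals.
Import Order.TTheory GRing.Theory Num.Theory.

(* Apply the definition of c_n to G itself (as the group type [subg G]) with
   phi = id: X is then the set S of x in G with x^n = 1, and |S| < |G| because
   H_n(G) <> 1, so |S|/|G| <= c_n.  As G = S \cup H_n(G) and 1 lies in both,
   |G| - |S| < |H_n(G)|, i.e. |G : H_n(G)| (|G| - |S|) < |G|, whence
   |G : H_n(G)| (1 - c_n) <= |G : H_n(G)| (1 - |S|/|G|) < 1. *)

Lemma Xnphi1 (gT : finGroupType) (n : nat) :
  Xnphi gT n 1%g = [set x : gT | (x ^+ n == 1)%g].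
Proof.
apply/setP => x; rewrite !inE.
under eq_bigr => i _ do rewrite expg1n perm1.
by rewrite prodg_const card_ord.
Qed.

Lemma cn_ratios_le1 (R : realType) (n : nat) (r : R) :
  cn_ratios R n r -> (r <= 1)%R.
Proof.
case=> -[gT [phi [_ _ ->]]] _.
have gT_gt0 : (0 < #|[set: gT]|)%N by apply/card_gt0P; exists 1%g.
by rewrite ler_pdivrMr ?ltr0n // mul1r ler_nat subset_leq_card ?subsetT.
Qed.

Lemma ratio_expn_eq1_le_c_n (R : realType) (n : nat) (gT : finGroupType) :
  (#|[set x : gT | (x ^+ n == 1)%g]| < #|[set: gT]|)%N ->
  (#|[set x : gT | (x ^+ n == 1)%g]|%:R / #|[set: gT]|%:R <= c_n R n)%R.
Proof.
move=> lt_card; apply: ub_le_sup; first by exists 1%R => r /cn_ratios_le1.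
split; first by exists gT, 1%g; rewrite group1 expg1n Xnphi1.
move=> /= /divr1_eq /eqP; rewrite eqr_nat => /eqP eq_card.
by rewrite eq_card ltnn in lt_card.
Qed.

Lemma card_subgT (gT : finGroupType) (G : {group gT}) :
  #|[set: subg_of G]| = #|G|.
Proof. by rewrite (card_isog (isog_subg G)). Qed.

Lemma card_subg_expn_eq1 (gT : finGroupType) (G : {group gT}) (n : nat) :
  #|[set u : subg_of G | (u ^+ n == 1)%g]| = #|[set x in G | (x ^+ n == 1)%g]|.
Proof.
have sgvalX (u : subg_of G) : sgval (u ^+ n)%g = (sgval u ^+ n)%g.
  by rewrite (morphX (sgval_morphism G)) ?inE.
rewrite -(card_imset _ (@subg_inj _ G)); apply: eq_card => x.
apply/imsetP/idP => [[u] | ].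
  by rewrite !inE => /eqP un1 ->; rewrite subgP -sgvalX un1 /=.
rewrite inE => /andP[Gx xn1]; exists (subg G x); last by rewrite subgK.
by rewrite inE -(inj_eq subg_inj) sgvalX subgK.
Qed.

Lemma indexg_mul_card_compl_lt (gT : finGroupType) (G H : {group gT})
    (S : {set gT}) :
  H \subset G -> G \subset S :|: H -> 1%g \in S ->
  (#|G : H|%g * (#|G| - #|S|) < #|G|)%N.
Proof.
move=> sHG sG_SH S1.
have SH_gt0 : (0 < #|S :&: H|)%N.
  by apply/card_gt0P; exists 1%g; rewrite inE S1 group1.
have lt_G_SH : (#|G| < #|S| + #|H|)%N.
  by rewrite -cardsUI -addn1 leq_add ?subset_leq_card.
have gap_lt : (#|G| - #|S| < #|H|)%N by rewrite ltn_psubLR ?cardG_gt0.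
by rewrite -[X in (_ < X)%N](Lagrange sHG) mulnC ltn_pmul2r ?indexg_gt0.
Qed.

Lemma ltr_nat_div_1subr (R : realFieldType) (k N s : nat) (c : R) :
  (k * (N - s) < N)%N -> (s <= N)%N -> (s%:R / N%:R <= c)%R -> (c < 1)%R ->
  (k%:R < 1 / (1 - c))%R.
Proof.
move=> lt_kN le_sN le_c lt_c1.
have N_gt0 : (0 < N)%N := leq_ltn_trans (leq0n _) lt_kN.
have N0 : (N%:R != 0 :> R)%R by rewrite pnatr_eq0 -lt0n.
rewrite ltr_pdivlMr ?subr_gt0 //.
apply: (le_lt_trans (y := (k%:R * (1 - s%:R / N%:R))%R)).
  by rewrite ler_wpM2l ?ler0n // lerB.
have -> : (1 - s%:R / N%:R = (N - s)%:R / N%:R :> R)%R.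
  by rewrite natrB // mulrBl divff.
rewrite mulrA ltr_pdivrMr ?ltr0n //.
by rewrite mul1r -natrM ltr_nat.
Qed.

Section HnCover.

Variables (gT : finGroupType) (G : {group gT}) (n : nat).

Let S := [set x in G | (x ^+ n == 1)%g].

Lemma Hn_sub : Hn gT G n \subset G.
Proof.
by rewrite gen_subG; apply/fintype.subsetP => x; rewrite inE => /andP[].
Qed.

Lemma sub_expn_eq1U_Hn : G \subset S :|: Hn gT G n.
Proof.
apply/fintype.subsetP => x Gx; rewrite !inE Gx /=.
by case: eqP => //= /eqP xn1; rewrite mem_gen // inE Gx.
Qed.

Lemma card_expn_eq1_lt : Hn gT G n != 1%g -> (#|S| < #|G|)%N.
Proof.
move=> Hn1; have : [set x in G | (x ^+ n != 1)%g] != finset.set0.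
  by apply: contraNneq Hn1 => A0; rewrite /Hn A0 gen0.
case/set0Pn => x; rewrite inE => /andP[Gx xn1].
apply/proper_card/properP; split.
  by apply/fintype.subsetP => y; rewrite inE => /andP[].
by exists x; rewrite // inE Gx (negPf xn1).
Qed.

End HnCover.

Theorem proposition1p4 (R : realType) (n : nat) (gT : finGroupType) (G : {group gT}) :
  (0 < n)%N -> (c_n R n < 1)%R -> (Hn gT G n != 1)%g ->
  ((#|G : Hn gT G n|)%g%:R < 1 / (1 - c_n R n))%R.
Proof.
move=> _ c_lt1 Hn1.
set S := [set x in G | (x ^+ n == 1)%g].
have lt_SG : (#|S| < #|G|)%N by exact: card_expn_eq1_lt.
have S1 : 1%g \in S by rewrite /S inE group1 expg1n eqxx.
apply: ltr_nat_div_1subr c_lt1.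
- exact: indexg_mul_card_compl_lt (Hn_sub _ _ _) (sub_expn_eq1U_Hn _ _ _) S1.
- exact: ltnW.
- have := ratio_expn_eq1_le_c_n R n (subg_of G).
  by rewrite card_subgT card_subg_expn_eq1; apply.
Qed.
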